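(* For every $1\le j\le m+n$, as operators on $\widetilde T(\mathbb V)$, $$L(e_j)L(e_j^\ast)=\frac{K_j-K_j^{-1}}{q_j-q_j^{-1}}.$$
   Context: $q$ is an indeterminate, $m,n\ge1$, $[m+n]=\{1,\dots,m+n\}$. The Hecke algebra $\mathscr H_d$ is the $\mathbb C(q)$-algebra generated by $T_1,\dots,T_{d-1}$ with relations $(T_i-q)(T_i+q^{-1})=0$, $T_iT_{i+1}T_i=T_{i+1}T_iT_{i+1}$, $T_iT_j=T_jT_i$ ($|i-j|>1$); $T_w=T_{i_1}\cdots T_{i_k}$ for a reduced expression $w=s_{i_1}\cdots s_{i_k}\in\mathfrak S_d$; $\mathscr H_\infty$ is the inductive limit of $\mathscr H_0\subset\mathscr H_1\subset\cdots$, and $T\mapsto T^{\uparrow k}$ is the algebra endomorphism with $T_i^{\uparrow k}=T_{i+k}$. Parity: $\hat i=0$ if $i\le m$, $\hat i=1$ if $i>m$; $q_i=q^{(-1)^{\hat i}}$. $\gamma(i,j)=1$ if $i>j$ and $-1$ if $i\le j$. $\mathbb V$ is the $\mathbb C(q)$-vector space with basis $e_1,\dots,e_{m+n}$, $e_i$ of parity $\hat i$; $e_1^\ast,\dots,e_{m+n}^\ast$ is the dual basis. For $I=(i_d,\dots,i_1)\in[m+n]^d$, $e_I=e_{i_d}\otimes\cdots\otimes e_{i_1}$, written $e_{i_d}\cdots e_{i_1}$; $I.s_k$ is $I$ with the entries $i_k,i_{k+1}$ swapped. The right $\mathscr H_d$-action on $\mathbb V^{\otimes d}$: $e_I.T_k=(-1)^{\hat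 i_k\hat i_{k+1}}e_{I.s_k}$ if $i_k>i_{k+1}$; $=(-1)^{\hat i_k}q_{i_k}e_I$ if $i_k=i_{k+1}$; $=(-1)^{\hat i_k\hat i_{k+1}}e_{I.s_k}+(q-q^{-1})e_I$ if $i_k<i_{k+1}$. Set $\widetilde T_d(\mathbb V)=\mathbb V^{\otimes d}\otimes_{\mathscr H_d}\mathscr H_\infty$, $\widetilde T(\mathbb V)=\bigoplus_{d\ge0}\widetilde T_d(\mathbb V)$, with product $(e_{j_k}\cdots e_{j_1}\otimes T_\tau)\cdot(e_{i_d}\cdots e_{i_1}\otimes T_\sigma)=e_{j_k}\cdots e_{j_1}e_{i_d}\cdots e_{i_1}\otimes T_\tau^{\uparrow d}T_\sigma$. For $\varphi\in\widetilde T(\mathbb V)$, $L(\varphi)$ is left multiplication by $\varphi$; $L(e_i)$ uses $e_i\otimes1\in\widetilde T_1(\mathbb V)$. For $j\in[m+n]$, $f_j(e_r)=q_j^{-\delta_{jr}}e_r$ and $g_j(e_r)=e_r\otimes T_1^{-\gamma(j,r)}\in\widetilde T_1(\mathbb V)$, and $L(e_j^\ast)=0$ on $\widetilde T_0(\mathbb V)$, $$L(e_j^\ast)(e_{i_d}\cdots e_{i_1}\otimes T_\sigma)=\sum_{k=1}^d(-1)^{\hat j(\hat i_d+\cdots+\hat i_{k+1})}\langle e_j^\ast,e_{i_k}\rangle\,g_j(e_{i_d})\cdots g_j(e_{i_{k+1}})f_j(e_{i_{k-1}})\cdots f_j(e_{i_1})\cdot T_\sigma$$ (product in $\widetilde T(\mathbb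 V)$). The operator $K_j$ ($j\in[m+n]$) on $\widetilde T(\mathbb V)$ acts by $K_j(e_I\otimes T)=q_j^{\#\{r:\,i_r=j\}}\,e_I\otimes T$. *)

From HB Require Import structures.
From mathcomp Require Import all_boot all_algebra.
From mathcomp Require Import fraction.
From mathcomp.real_closed Require Import complex.
From mathcomp Require Import Rstruct.
From mathcomp Require Import finmap monalg.

Set Implicit Arguments.
Unset Strict Implicit.
Unset Printing Implicit Defensive.

Import GRing.Theory.
Local Open Scope ring_scope.

Notation Cq := {fraction {poly (Rdefinitions.R)[i]}}.
Definition qq : Cq := FracField.tofrac 'X.

Section SuperTensor.
Variables m n : nat.

(* Indices.  An index i of [m+n] = {1,...,m+n} is encoded by the      *)
(* ordinal i-1 : 'I_(m+n); so the paper's index i corresponds to the  *)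
(* value (val i).+1.  Comparisons are unaffected by this shift.        *)
Notation idx := 'I_(m + n).

(* parity \hat i (on the 0-based value v = i-1): 0 if i <= m, 1 else *)
Definition parn (v : nat) : nat := (m <= v)%N.
Definition qin (v : nat) : Cq := if (m <= v)%N then qq^-1 else qq.

(* Basis of the free module underlying \tilde T(V):                    *)
(*  pairs (I, w) where                                                 *)
(*   I = [:: i_d; ...; i_1] : seq idx  is the tensor e_{i_d}...e_{i_1} *)
(*       (listed in the written order, so i_k is at list position d-k) *)
(*   w : seq nat is a word in the Hecke generators of H_infty, the     *)
(*       letter a standing for the generator T_{a+1}; the word         *)
(*       [:: a_1; ...; a_l] stands for T_{a_1+1} ... T_{a_l+1}.        *)
(* The basis element (I, w) represents e_I (x) T_w in                  *)
(*  \tilde T(V) = \bigoplus_d V^{(x)d} (x)_{H_d} H_infty.              *)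
Definition Bas := (seq idx * seq nat)%type.
Definition FM := {malg Cq[Bas]}.
Definition bas (b : Bas) : FM := << b >>.

Definition lext (f : Bas -> FM) (x : FM) : FM :=
  \sum_(b <- msupp x) x@_b *: f b.

(* 0-based value of the entry i_k of I (1 <= k <= size I) *)
Definition ent (I : seq idx) (k : nat) : nat :=
  nth 0%N (map val I) (size I - k).

Definition rem_at (I : seq idx) (k : nat) : seq idx :=
  take (size I - k) I ++ drop (size I - k).+1 I.

(* Right action of T_k (1 <= k < size I) on e_I, tensored with the     *)
(* word w:  (e_I . T_k) (x) T_w.                                       *)
Definition actT (k : nat) (I : seq idx) (w : seq nat) : FM :=
  let p := (size I - k.+1)%N in
  match drop p I with
  | a :: b :: rest =>
      (* a = i_{k+1}, b = i_k *)
      let sw := bas (take p I ++ b :: a :: rest, w) in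
      let sg : Cq := (-1) ^+ (parn b * parn a) in
      if (a < b)%N then sg *: sw
      else if b == a then ((-1) ^+ parn b * qin b) *: bas (I, w)
      else sg *: sw + (qq - qq^-1) *: bas (I, w)
  | _ => 0
  end.

(* The subspace of relations: the kernel of the projection of the free *)
(* module onto \tilde T(V).  It is spanned by                          *)
(*  - the Hecke relations of H_infty (two-sided: arbitrary words u, v   *)
(*    around them),                                                     *)
(*  - the balancing relations  e_I (x) T_k h = (e_I . T_k) (x) h,       *)
(*    1 <= k <= d-1, of the tensor product over H_d.                    *)
Inductive Rel : FM -> Prop :=
| Rel_quad (I : seq idx) (u v : seq nat) (a : nat) :
    (* (T - q)(T + q^{-1}) = T^2 - (q - q^{-1}) T - 1 *)
    Rel (bas (I, u ++ a :: a :: v) - (qq - qq^-1) *: bas (I, u ++ a :: v)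
         - bas (I, u ++ v))
| Rel_braid (I : seq idx) (u v : seq nat) (a : nat) :
    Rel (bas (I, u ++ [:: a; a.+1; a] ++ v)
         - bas (I, u ++ [:: a.+1; a; a.+1] ++ v))
| Rel_comm (I : seq idx) (u v : seq nat) (a b : nat) :
    (a.+1 < b)%N ->
    Rel (bas (I, u ++ [:: a; b] ++ v) - bas (I, u ++ [:: b; a] ++ v))
| Rel_bal (I : seq idx) (w : seq nat) (a : nat) :
    (a.+2 <= size I)%N ->
    Rel (bas (I, a :: w) - actT a.+1 I w)
| Rel0 : Rel 0
| RelD (x y : FM) : Rel x -> Rel y -> Rel (x + y)
| RelZ (c : Cq) (x : FM) : Rel x -> Rel (c *: x).

Definition Teq (x y : FM) : Prop := Rel (x - y).

(* L(e_j): left multiplication by e_j (x) 1 \in \tilde T_1(V):         *)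
Definition Le (j : idx) : FM -> FM :=
  lext (fun b => bas (j :: b.1, b.2)).

(* left multiplication by T_{a+1} (pos = true) or T_{a+1}^{-1}         *)
(* (pos = false) on the Hecke part;  T^{-1} = T - (q - q^{-1}).         *)
Definition prep (a : nat) (pos : bool) : FM -> FM :=
  lext (fun b => if pos then bas (b.1, a :: b.2)
                 else bas (b.1, a :: b.2) - (qq - qq^-1) *: bas b).

(* L(e_j^star) on a basis element, following the defining formula:        *)
(*  sum_k (-1)^{\hat j (\hat i_d + ... + \hat i_{k+1})} <e_j^star, e_{i_k}> *)
(*     g_j(e_{i_d}) ... g_j(e_{i_{k+1}}) f_j(e_{i_{k-1}}) ... f_j(e_{i_1}) *)
(*     . T_w ,                                                          *)
(* where the product in \tilde T(V) evaluates to                        *)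
(*  (prod_{r<k} q_j^{-delta_{j,i_r}})                                   *)
(*    e_{i_d}..^e_{i_k}..e_{i_1} (x) T_{d-1}^{e_d} ... T_k^{e_{k+1}} T_w *)
(* with e_r = -gamma(j, i_r), i.e. e_r = +1 iff j <= i_r.               *)
(* (T_{r-1} is the letter r-2.)                                         *)
Definition Lstar_bas (j : idx) (b : Bas) : FM :=
  let I := b.1 in let w := b.2 in let d := size I in
  \sum_(1 <= k < d.+1)
    if ent I k == val j then
      ((-1) ^+ (parn j * \sum_(k.+1 <= r < d.+1) parn (ent I r))
       * \prod_(1 <= r < k) (if ent I r == val j then (qin j)^-1 else 1))
      *: foldl (fun x r => prep (r - 2) (val j <= ent I r)%N x)
               (bas (rem_at I k, w)) (iota k.+1 (d - k))
    else 0.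

Definition Lstar (j : idx) : FM -> FM := lext (Lstar_bas j).

Definition Kop (j : idx) : FM -> FM :=
  lext (fun b => (qin j) ^+ (count_mem j b.1) *: bas b).
Definition Kinv (j : idx) : FM -> FM :=
  lext (fun b => (qin j) ^- (count_mem j b.1) *: bas b).

End SuperTensor.

From HB Require Import structures.
From mathcomp Require Import all_boot all_algebra.
From mathcomp Require Import fraction.
From mathcomp.real_closed Require Import complex.
From mathcomp Require Import Rstruct.
From mathcomp Require Import finmap monalg.
From mathcomp Require Import zify ring.
Import GRing.Theory.
Local Open Scope ring_scope.
Set Implicit Arguments.
Unset Strict Implicit.

(* On a basis vector e_I (x) T_w the k-th summand of L(e_j)L(e_j^\ast) is
   e_j e_{i_d}..^e_{i_k}..e_{i_1} (x) T_{d-1}^(+-1) ... T_k^(+-1) T_w.  Moving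
   the Hecke generators across the tensor sign one at a time, each of them
   moves e_j one slot to the right, at the cost of a sign and, when it passes
   a letter e_j, of a factor q_j, until e_j fills the slot of the removed
   e_{i_k}.  Hence e_I (x) T_w is an eigenvector; comparing the eigenvalues for
   I and a :: I gives a recursion whose solution is
   (q_j^c - q_j^-c) / (q_j - q_j^-1), with c the multiplicity of j in I. *)

Section LinearExtension.
Variables m n : nat.
Local Notation FM := (FM m n).
Local Notation Bas := (Bas m n).
Implicit Types (f g : Bas -> FM) (x : FM).

Lemma lext_widen f x (D : {fset Bas}) : (msupp x `<=` D)%fset ->
  lext f x = \sum_(b <- D) x@_b *: f b.
Proof.
move=> le_xD; rewrite /lext (big_fset_incl _ le_xD) //= => b _ /mcoeff_outdom ->.
by rewrite scale0r.
Qed.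

Lemma lext_is_linear f : linear (lext f).
Proof.
move=> c x y; set D := (msupp x `|` msupp y)%fset.
have le_xD : (msupp x `<=` D)%fset by rewrite fsubsetUl.
have le_yD : (msupp y `<=` D)%fset by rewrite fsubsetUr.
rewrite (@lext_widen f x D) // (@lext_widen f y D) // (@lext_widen f _ D); last first.
  by apply: fsubset_trans (msuppD_le _ _) _; apply: fsetSU; apply: msuppZ_le.
rewrite scaler_sumr -big_split; apply: eq_bigr => b _.
by rewrite mcoeffD mcoeffZ scalerDl scalerA.
Qed.

HB.instance Definition _ f :=
  GRing.isLinear.Build Cq FM FM *:%R (lext f) (lext_is_linear f).

Lemma lext_bas f b : lext f (bas b) = f b.
Proof.
by rewrite (@lext_widen f _ [fset b]%fset) ?msuppU_le // big_seq_fset1 mcoeffUU scale1r.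
Qed.

Lemma lext_scale f c x : lext (fun b => c *: f b) x = c *: lext f x.
Proof. by rewrite /lext scaler_sumr; apply: eq_bigr => b _; rewrite !scalerA mulrC. Qed.

Lemma eq_lext f g : f =1 g -> lext f =1 lext g.
Proof. by move=> fg x; apply: eq_bigr => b _; rewrite fg. Qed.

Lemma lext_comp f g x : lext f (lext g x) = lext (fun b => lext f (g b)) x.
Proof. by rewrite {2}/lext linear_sum; apply: eq_bigr => b _; rewrite linearZ. Qed.

End LinearExtension.

Section Congruence.
Variables m n : nat.
Local Notation FM := (FM m n).
Implicit Types x y z : FM.

Lemma Teq_refl x : Teq x x.
Proof. by rewrite /Teq subrr; apply: Rel0. Qed.

Lemma Teq_trans y x z : Teq x y -> Teq y z -> Teq x z.
Proof. by move=> xy yz; have := RelD xy yz; rewrite addrA subrK. Qed.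

Lemma TeqD x1 x2 y1 y2 : Teq x1 y1 -> Teq x2 y2 -> Teq (x1 + x2) (y1 + y2).
Proof. by move=> e1 e2; have := RelD e1 e2; rewrite /Teq opprD addrACA. Qed.

Lemma TeqZ c x y : Teq x y -> Teq (c *: x) (c *: y).
Proof. by move=> /(RelZ c); rewrite /Teq scalerBr. Qed.

Lemma Teq_sum (I : eqType) (s : seq I) (F G : I -> FM) :
  (forall i, i \in s -> Teq (F i) (G i)) ->
  Teq (\sum_(i <- s) F i) (\sum_(i <- s) G i).
Proof.
move=> FG; rewrite big_seq [X in Teq _ X]big_seq.
elim/big_rec2: _ => [|i x y /FG Fi xy]; [exact: Teq_refl | exact: TeqD].
Qed.

Lemma Teq_lext f g x : (forall b, Teq (f b) (g b)) -> Teq (lext f x) (lext g x).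
Proof. by move=> fg; apply: Teq_sum => b _; apply: TeqZ. Qed.

End Congruence.

Section Retensor.
Variables m n : nat.
Local Notation FM := (FM m n).
Local Notation Bas := (Bas m n).
Local Notation idx := 'I_(m + n).

Definition retensor (J : seq idx) : FM -> FM := lext (fun b => bas (J, b.2)).

Lemma retensor_bas J b : retensor J (bas b) = bas (J, b.2).
Proof. exact: lext_bas. Qed.

Lemma Le_retensor j J y : Le j (retensor J y) = retensor (j :: J) y.
Proof. by rewrite /Le /retensor lext_comp; apply: eq_lext => b; rewrite lext_bas. Qed.

Lemma prep_retensor a pos J y : prep a pos (retensor J y) = retensor J (prep a pos y).
Proof.
rewrite /prep /retensor !lext_comp; apply: eq_lext => b /=.
by rewrite lext_bas; case: pos; rewrite ?linearB ?linearZ /= !lext_bas.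
Qed.

Lemma Teq_prep_retensor a pos J J' (c : Cq) y :
  (forall w, Teq (prep a pos (bas (J, w))) (c *: bas (J', w))) ->
  Teq (prep a pos (retensor J y)) (c *: retensor J' y).
Proof.
move=> Jw; rewrite /retensor {1}/prep lext_comp -lext_scale.
by apply: Teq_lext => b; exact: Jw.
Qed.

End Retensor.

Lemma parn_mul m v : (parn m v * parn m v = parn m v)%N.
Proof. by rewrite /parn; case: (m <= v)%N. Qed.

Lemma qq_neq0 : qq != 0.
Proof. by rewrite /qq tofrac_eq0 polyX_eq0. Qed.

Lemma qin_subV_neq0 m v : qin m v - (qin m v)^-1 != 0.
Proof.
have qq_subV : qq - qq^-1 != 0.
  apply/negP; rewrite subr_eq0 => /eqP qqV.
  have : qq * qq = 1 by rewrite {2}qqV (divff qq_neq0).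
  rewrite /qq -tofracM -tofrac1 => /eqP; rewrite tofrac_eq -expr2 => /eqP X2.
  by have := congr1 (fun p : {poly _} => size p) X2; rewrite /= size_polyXn size_poly1.
rewrite /qin; case: ifP => _; last exact: qq_subV.
by rewrite invrK -opprB oppr_eq0.
Qed.

Section Entries.
Variables m n : nat.
Local Notation idx := 'I_(m + n).

Lemma ent_nth (x0 : idx) (I : seq idx) k : (0 < k <= size I)%N ->
  ent I k = val (nth x0 I (size I - k)).
Proof. by move=> /andP[k_gt0 k_le]; rewrite /ent (nth_map x0) //; lia. Qed.

Lemma ent_cons (a : idx) (I : seq idx) r : (0 < r <= size I)%N ->
  ent (a :: I) r = ent I r.
Proof. by move=> r_range; rewrite /ent /= (_ : _ - _ = (size I - r).+1)%N //; lia. Qed.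

Lemma ent_top (a : idx) (I : seq idx) : ent (a :: I) (size I).+1 = val a.
Proof. by rewrite /ent /= subnn. Qed.

Lemma big_ent_cons (R : Type) (idx0 : R) (op : R -> R -> R) (F : nat -> R)
    (a : idx) (I : seq idx) lo hi :
  (0 < lo)%N -> (hi <= (size I).+1)%N ->
  \big[op/idx0]_(lo <= r < hi) F (ent (a :: I) r) =
  \big[op/idx0]_(lo <= r < hi) F (ent I r).
Proof. by move=> lo_gt0 hi_le; apply: eq_big_nat => r r_range; rewrite ent_cons //; lia. Qed.

End Entries.

Section MovePast.
Variables (m n : nat) (j : 'I_(m + n)).
Local Notation idx := 'I_(m + n).
Local Notation FM := (FM m n).

Definition swap_coef (a : idx) : Cq :=
  (-1) ^+ (parn m a * parn m j) * (if a == j then qin m j else 1).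

Definition swap_coef_prod (S : seq idx) : Cq := \prod_(a <- S) swap_coef a.

(* Choosing T or T^-1 according to [j <= a] is what makes the balancing
   relation produce a pure transposition of e_j and e_a when a != j. *)
Lemma prep_swap (P R : seq idx) (a : idx) (u : seq nat) :
  Teq (prep (size R) (j <= a)%N (bas (P ++ j :: a :: R, u)))
      (swap_coef a *: bas (P ++ a :: j :: R, u)).
Proof.
have bal : Teq (bas (P ++ j :: a :: R, size R :: u)) (actT (size R).+1 (P ++ j :: a :: R) u).
  by apply: Rel_bal; rewrite size_cat /= !addnS !ltnS leq_addl.
have act := erefl (actT (size R).+1 (P ++ j :: a :: R) u).
rewrite {2}/actT (_ : _ - _ = size P)%N in act; last by rewrite size_cat /=; lia.
rewrite drop_size_cat // take_size_cat //= in act.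
rewrite /prep lext_bas /= /swap_coef; move: bal; rewrite act.
case: (ltngtP j a) => [ja | aj | /val_inj ja] /= bal.
- have a_neq_j : (a == j) = false by apply/negbTE; rewrite neq_ltn ja orbT.
  by rewrite a_neq_j mulr1.
- have a_neq_j : (a == j) = false by apply/negbTE; rewrite neq_ltn aj.
  rewrite a_neq_j mulr1 in bal *.
  by have := TeqD bal (Teq_refl (- ((qq - qq^-1) *: bas (P ++ j :: a :: R, u)))); rewrite addrK.
- by subst a; rewrite eqxx parn_mul in bal *.
Qed.

Definition Lstar_step (I : seq idx) (x : FM) (r : nat) : FM :=
  prep (r - 2) (val j <= ent I r)%N x.

Lemma foldl_Lstar_step_retensor I J y rs :
  foldl (Lstar_step I) (retensor J y) rs = retensor J (foldl (Lstar_step I) y rs).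
Proof. by elim: rs y => [|r rs IH] y //=; rewrite -IH /Lstar_step prep_retensor. Qed.

(* With e_j in slot t of the prefix A, the nn generators still to be moved
   across the tensor sign carry it to the end of A. *)
Lemma move_past (A B : seq idx) (y : FM) nn t : (t + nn = size A)%N ->
  Teq (retensor (take t A ++ j :: drop t A ++ B)
                (foldl (Lstar_step (A ++ j :: B)) y (iota (size B).+2 nn)))
      (swap_coef_prod (drop t A) *: retensor (A ++ j :: B) y).
Proof.
elim: nn t => [|nn IH] t tA.
  rewrite addn0 in tA; rewrite tA take_size drop_size /= /swap_coef_prod big_nil scale1r.
  exact: Teq_refl.
have t_lt : (t < size A)%N by lia.
set a := nth j A t.
have dropA : drop t A = a :: drop t.+1 A by rewrite /a -drop_nth.
have entA : ent (A ++ j :: B) ((size B).+2 + nn) = val a.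
  rewrite (ent_nth j); last by rewrite size_cat /=; lia.
  by rewrite nth_cat size_cat /= (_ : _ - _ = t)%N ?t_lt //; lia.
have letter : ((size B).+2 + nn - 2 = size (drop t.+1 A ++ B))%N.
  by rewrite size_cat size_drop; lia.
rewrite -[nn.+1]addn1 iotaD foldl_cat /= {1}/Lstar_step entA letter dropA /=.
rewrite -prep_retensor; apply: (Teq_trans (Teq_prep_retensor _ (fun w => prep_swap _ _ a w))).
rewrite -cat_rcons -take_nth // /swap_coef_prod big_cons -scalerA.
by apply: TeqZ; apply: IH; lia.
Qed.

Lemma Le_Lstar_term (A B : seq idx) (w : seq nat) :
  Teq (Le j (foldl (Lstar_step (A ++ j :: B)) (bas (A ++ B, w)) (iota (size B).+2 (size A))))
      (swap_coef_prod A *: bas (A ++ j :: B, w)).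
Proof.
have := @move_past A B (bas ([::], w)) (size A) 0 (add0n _).
by rewrite take0 drop0 -[bas (A ++ B, w)](retensor_bas _ ([::], w))
  foldl_Lstar_step_retensor Le_retensor retensor_bas.
Qed.

End MovePast.

Section Eigenvalue.
Variables (m n : nat) (j : 'I_(m + n)).
Local Notation idx := 'I_(m + n).
Local Notation q := (qin m j).

Definition Lstar_coef (I : seq idx) k : Cq :=
  (-1) ^+ (parn m j * \sum_(k.+1 <= r < (size I).+1) parn m (ent I r))
  * \prod_(1 <= r < k) (if ent I r == val j then q^-1 else 1).

Definition LeLstar_coef (I : seq idx) k : Cq :=
  if ent I k == val j then Lstar_coef I k * swap_coef_prod j (take (size I - k) I)
  else 0.

Definition LeLstar_eigen (I : seq idx) : Cq :=
  \sum_(1 <= k < (size I).+1) LeLstar_coef I k.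

Lemma Le_Lstar_bas (I : seq idx) w :
  Teq (Le j (Lstar_bas j (I, w))) (LeLstar_eigen I *: bas (I, w)).
Proof.
rewrite /Lstar_bas /LeLstar_eigen /= scaler_suml /Le linear_sum.
apply: Teq_sum => k; rewrite mem_index_iota ltnS => k_range.
have /andP[k_gt0 k_le] := k_range.
rewrite /LeLstar_coef; case: eqP => [entj | _]; last first.
  by rewrite linear0 scale0r; apply: Teq_refl.
rewrite linearZ -scalerA; apply: TeqZ.
set A := take (size I - k) I; set B := drop (size I - k).+1 I.
have sizeA : size A = (size I - k)%N by rewrite size_takel // leq_subr.
have sizeB : k = (size B).+1 by rewrite size_drop; lia.
have nth_j : nth j I (size I - k) = j by apply: val_inj; rewrite /= -entj (ent_nth j).
have eI : I = A ++ j :: B.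
  by rewrite /A /B -nth_j -drop_nth ?cat_take_drop //; lia.
have := Le_Lstar_term j A B w.
by rewrite -eI -sizeB sizeA.
Qed.

Lemma prod_ent_count (I : seq idx) (c : Cq) :
  \prod_(1 <= r < (size I).+1) (if ent I r == val j then c else 1) = c ^+ count_mem j I.
Proof.
elim: I => [|a I IH]; first by rewrite big_geq.
rewrite big_nat_recr //= ent_top (big_ent_cons _ _ (fun e => if e == val j then c else 1)) //.
by rewrite IH val_eqE exprD mulrC; case: (a == j); rewrite ?expr1 ?expr0.
Qed.

Lemma LeLstar_coef_cons (a : idx) (I : seq idx) k : (0 < k <= size I)%N ->
  LeLstar_coef (a :: I) k = LeLstar_coef I k * (if a == j then q else 1).
Proof.
move=> k_range; have /andP[k_gt0 k_le] := k_range.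
have k_le1 : (k <= (size I).+1)%N by apply: leqW.
rewrite /LeLstar_coef ent_cons //; case: eqP => _; last by rewrite mul0r.
rewrite /Lstar_coef /= (_ : _ - _ = (size I - k).+1)%N; last by lia.
rewrite /= /swap_coef_prod big_cons big_nat_recr //= ent_top.
rewrite (big_ent_cons _ _ (parn m)) //.
rewrite (big_ent_cons _ _ (fun e => if e == val j then q^-1 else 1)) //.
rewrite mulnDr exprD /swap_coef [(parn m a * _)%N]mulnC.
by rewrite -(signr_odd _ (parn m j * parn m a)); case: odd => /=; ring.
Qed.

Lemma LeLstar_coef_top (a : idx) (I : seq idx) :
  LeLstar_coef (a :: I) (size I).+1 = if a == j then q^-1 ^+ count_mem j I else 0.
Proof.
rewrite /LeLstar_coef ent_top val_eqE; case: (a == j) => //.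
rewrite /Lstar_coef /= big_geq // muln0 expr0 mul1r subnn take0 /swap_coef_prod big_nil mulr1.
by rewrite (big_ent_cons _ _ (fun e => if e == val j then q^-1 else 1)) // prod_ent_count.
Qed.

Lemma LeLstar_eigenE (I : seq idx) :
  LeLstar_eigen I * (q - q^-1) = q ^+ count_mem j I - (q ^+ count_mem j I)^-1.
Proof.
elim: I => [|a I IH]; first by rewrite /LeLstar_eigen big_geq // mul0r expr0 invr1 subrr.
rewrite /LeLstar_eigen big_nat_recr //= LeLstar_coef_top.
rewrite (@eq_big_nat _ _ _ _ _ _ (fun k => LeLstar_coef I k * (if a == j then q else 1)));
  last by move=> k; exact: LeLstar_coef_cons.
rewrite -mulr_suml -/(LeLstar_eigen I).
case: (a == j); last by rewrite mulr1 addr0 add0n.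
rewrite add1n exprS invfM exprVn; set c := q ^+ _.
transitivity (q * (LeLstar_eigen I * (q - q^-1)) + c^-1 * (q - q^-1)); first by ring.
by rewrite IH -/c !mulrBr addrA [c^-1 * q]mulrC subrK [c^-1 * _]mulrC.
Qed.

End Eigenvalue.

Theorem lemma6p2 (m n : nat) (hm : (1 <= m)%N) (hn : (1 <= n)%N)
    (j : 'I_(m + n)) (x : FM m n) :
  Teq (Le j (Lstar j x))
      ((qin m j - (qin m j)^-1)^-1 *: (Kop j x - Kinv j x)).
Proof.
have -> : Kop j x - Kinv j x = lext (fun b =>
    (qin m j ^+ count_mem j b.1 - (qin m j ^+ count_mem j b.1)^-1) *: bas b) x.
  by rewrite /Kop /Kinv /lext -sumrB; apply: eq_bigr => b _; rewrite -scalerBr scalerBl.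
rewrite /Lstar {1}/Le lext_comp -lext_scale; apply: Teq_lext => -[I w].
apply: (Teq_trans (Le_Lstar_bas j I w)).
by rewrite scalerA -LeLstar_eigenE mulrC mulfK ?qin_subV_neq0 //; apply: Teq_refl.
Qed.
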